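(* Let $n\ge3$ be an integer, $k=n$, and let $X$ be the discrete-time Markov chain on $\mathbb{N}^{n-1}$ described in the context. Then $X$ is unstable (not ergodic).
   Context: $\mathbb{N}=\{0,1,2,\dots\}$. $\mathbf{0}$, $\mathbf{1}$ are the all-zero and all-one vectors of dimension $n-1$, $\mathbf{e}_l$ the $l$-th unit vector. For $j=0,\dots,n-1$, $R_j$ is the set of $\mathbf{x}\in\mathbb{N}^{n-1}$ with exactly $j$ zero entries. $X$ is the Markov chain on $\mathbb{N}^{n-1}$ with nonzero transition probabilities: from $\mathbf{x}\in R_0$, to $\mathbf{x}-\mathbf{1}$ w.p. $\frac{k-(n-1)}{k}$ and to $\mathbf{x}+\mathbf{e}_l$ w.p. $\frac1k$ ($l=1,\dots,n-1$); from $\mathbf{x}\in R_j$, $1\le j\le n-2$, to $\mathbf{x}+\mathbf{e}_l$ w.p. $\frac{k-(n-1-j)}{kj}$ if $x_l=0$ and w.p. $\frac1k$ if $x_l\ge1$; from $\mathbf{0}$ to $\mathbf{e}_l$ w.p. $\frac1{n-1}$. *)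

From HB Require Import structures.
From mathcomp Require Import all_boot all_order all_algebra.
From mathcomp Require Import classical_sets boolp reals ereal esum.
Set Implicit Arguments. Unset Strict Implicit. Unset Printing Implicit Defensive.
Import Order.TTheory GRing.Theory Num.Theory.
Local Open Scope classical_set_scope.
Local Open Scope ring_scope.

(* States: vectors x in N^m, with m = n-1. *)
Definition state (m : nat) := {ffun 'I_m -> nat}.

(* number of zero entries of x : x lies in R_j iff nzeros x = j *)
Definition nzeros m (x : state m) : nat := #|[set l | x l == 0%N]|.

Definition vdec m (x : state m) : state m := [ffun i => (x i).-1].
Definition vinc m (x : state m) (l : 'I_m) : state m :=
  [ffun i => if i == l then (x i).+1 else x i].

Definition up_prob (R : realType) m (k : nat) (x : state m) (l : 'I_m) : R :=
  let j := nzeros x in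
  if j == 0%N then 1 / k%:R
  else if j == m then 1 / m%:R
  else if x l == 0%N then (k%:R - (m - j)%:R) / (k%:R * j%:R)
  else 1 / k%:R.

Definition trans (R : realType) m (k : nat) (x y : state m) : R :=
  (if (nzeros x == 0%N) && (y == vdec x) then (k%:R - m%:R) / k%:R else 0)
  + \sum_(l < m) (if y == vinc x l then up_prob R k x l else 0).

(* first-passage probabilities: fp P t x y = P_x(first visit to y, at time >= 1,
   occurs at time t+1) *)
Fixpoint fp (R : realType) (S : choiceType) (P : S -> S -> R) (t : nat) (x y : S)
  : \bar R :=
  match t with
  | 0%N => (P x y)%:E
  | t'.+1 => \esum_(z in ~` [set y]) ((P x z)%:E * fp P t' z y)%E
  end.

Definition positive_recurrent (R : realType) (S : choiceType) (P : S -> S -> R) (x : S)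
  : Prop :=
  (\esum_(t in [set: nat]) fp P t x x = 1)%E /\
  (\esum_(t in [set: nat]) ((t.+1)%:R%:E * fp P t x x) < +oo)%E.

From mathcomp Require Import all_boot all_order all_algebra.
From mathcomp Require Import classical_sets boolp reals ereal esum.
From mathcomp Require Import normedtype sequences.
From mathcomp Require Import ring lra.
Set Implicit Arguments. Unset Strict Implicit. Unset Printing Implicit Defensive.
Import Order.TTheory GRing.Theory Num.Theory.
Local Open Scope ring_scope.

(* The sum of the coordinates of X is a submartingale: from R_0 it drops by
   n - 1 with probability 1/n and otherwise rises by 1, and from every other
   state it rises by 1.  Stopping it at the first return to x, a walk started
   at x + e_l (one unit above x) fails to return within t steps with
   probability at least 1/(t+1).  So the return time T to x satisfies
   P(T > t + 1) >= c / (t + 1), and E[T] = sum_t P(T > t) diverges like the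
   harmonic series. *)

Section distributions_on_nat.
Variable R : realType.
Implicit Types (u F : nat -> R) (c p : R).

Lemma sum_le_esum_nat u N : (forall t, 0 <= u t) ->
  ((\sum_(t < N) u t)%:E <= \esum_(t in [set: nat]) (u t)%:E)%E.
Proof.
move=> u_ge0; rewrite -nneseries_esumT => [|t]; last by rewrite lee_fin.
rewrite -sumEFin (_ : (\sum_(t < N) _ = \sum_(0 <= t < N) (u t)%:E)%E).
  by apply: nneseries_lim_ge => t _ _; rewrite lee_fin.
by rewrite big_mkord.
Qed.

Lemma esum_nat_le u c : (forall t, 0 <= u t) ->
  (forall N, \sum_(t < N) u t <= c) ->
  (\esum_(t in [set: nat]) (u t)%:E <= c%:E)%E.
Proof.
move=> u_ge0 le_c; rewrite -nneseries_esumT => [|t]; last by rewrite lee_fin.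
apply: lime_le; first by apply: is_cvg_nneseries => t _ _; rewrite lee_fin.
by apply: nearW => N; rewrite sumEFin lee_fin big_mkord.
Qed.

Lemma sum_weighted_increments F N :
  \sum_(t < N) t.+1%:R * (F t.+1 - F t) = \sum_(t < N) (F N - F t).
Proof.
elim: N => [|N IH]; first by rewrite !big_ord0.
rewrite !big_ord_recr /= IH -[in LHS]natr1.
have -> : \sum_(t < N) (F N.+1 - F t)
        = \sum_(t < N) (F N - F t) + N%:R * (F N.+1 - F N).
  rewrite mulr_natl -[in X in _ *+ X](card_ord N) -sumr_const -big_split /=.
  by apply: eq_bigr => t _; ring.
ring.
Qed.

(* [F t] is the probability that a random time [tau >= 1] is at most [t];
   this is the inequality half of [E tau = sum_t P(tau > t)]. *)
Lemma tail_sum_le_mean F : F 0%N = 0 -> (forall t, F t <= F t.+1) ->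
  (\esum_(t in [set: nat]) (F t.+1 - F t)%:E = 1)%E ->
  (\esum_(t in [set: nat]) (t.+1%:R%:E * (F t.+1 - F t)%:E) < +oo)%E ->
  forall T, \sum_(t < T) (1 - F t)
            <= fine (\esum_(t in [set: nat]) (t.+1%:R%:E * (F t.+1 - F t)%:E))%E.
Proof.
move=> F0 F_incr F_sum1 mean_fin T; set M := fine _.
have F_mono s t : (s <= t)%N -> F s <= F t.
  by move=> /subnK <-; elim: (t - s)%N => [|d IH] //=; rewrite (le_trans IH).
have increments_ge0 t : 0 <= F t.+1 - F t by rewrite subr_ge0.
have partial_le_M N : \sum_(t < N) (F N - F t) <= M.
  rewrite -sum_weighted_increments -lee_fin fineK; last first.
    by rewrite ge0_fin_numE // esum_ge0 // => t _; rewrite mule_ge0 ?lee_fin.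
  under eq_esum do rewrite -EFinM.
  by apply: sum_le_esum_nat => t; rewrite mulr_ge0.
have F_near1 e : 0 < e -> exists N, 1 - e < F N.
  move=> e_gt0; apply/not_existsP => F_small.
  suff : (\esum_(t in [set: nat]) (F t.+1 - F t)%:E <= (1 - e)%:E)%E.
    by rewrite F_sum1 lee_fin; lra.
  apply: esum_nat_le => // N.
  have := telescope_sumr F (leq0n N); rewrite big_mkord F0 subr0 => ->.
  by rewrite leNgt; apply/negP/F_small.
case: T => [|T]; first by have := partial_le_M 0%N; rewrite !big_ord0.
apply/ler_addgt0Pr => e e_gt0.
have [N FN] := F_near1 (e / T.+1%:R) (divr_gt0 e_gt0 (ltr0Sn _ _)).
pose N' := maxn N T.+1.
have tail_small : T.+1%:R * (1 - F N') <= e.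
  rewrite mulrC -ler_pdivlMr ?ltr0Sn // lerBlDl -lerBlDr.
  by apply/ltW/(lt_le_trans FN)/F_mono/leq_maxl.
have head_le : \sum_(t < T.+1) (F N' - F t) <= \sum_(t < N') (F N' - F t).
  rewrite (big_ord_widen N' (fun t => F N' - F t) (leq_maxr N T.+1)).
  rewrite [leRHS](bigID (fun t : 'I_N' => (t < T.+1)%N)) /= lerDl.
  by apply: sumr_ge0 => t _; rewrite subr_ge0 F_mono // ltnW.
have split_sum : \sum_(t < T.+1) (1 - F t)
    = \sum_(t < T.+1) (F N' - F t) + T.+1%:R * (1 - F N').
  rewrite mulr_natl -[in X in _ *+ X](card_ord T.+1) -sumr_const.
  by rewrite -big_split /=; apply: eq_bigr => t _; ring.
by rewrite split_sum; have := partial_le_M N'; lra.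
Qed.

Lemma heavy_tail_mean_infinite F p : 0 < p ->
  F 0%N = 0 -> (forall t, F t <= F t.+1) ->
  (\esum_(t in [set: nat]) (F t.+1 - F t)%:E = 1)%E ->
  (forall t, p / t.+1%:R <= 1 - F t.+1) ->
  ~ (\esum_(t in [set: nat]) (t.+1%:R%:E * (F t.+1 - F t)%:E) < +oo)%E.
Proof.
move=> p_gt0 F0 F_incr F_sum1 tail_ge mean_fin.
have := tail_sum_le_mean F0 F_incr F_sum1 mean_fin; set M := fine _ => tail_sum_le.
apply: (@dvg_harmonic R); apply: nondecreasing_is_cvgn.
  by apply: nondecreasing_series => t _ _; apply: harmonic_ge0.
exists (M / p) => _ [T _ <-]; rewrite /series /= big_mkord ler_pdivlMr // mulrC.
apply: le_trans (tail_sum_le T); rewrite mulr_sumr.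
by apply: ler_sum => t _; rewrite (le_trans (tail_ge t)) // lerD2l lerN2.
Qed.

End distributions_on_nat.

Lemma esum_point (R : realType) (T : choiceType) (u : T) (v : R) : 0 <= v ->
  (\esum_(w in [set: T]) (if w == u then v else 0)%:E = v%:E)%E.
Proof.
move=> v_ge0; rewrite -(@esum_set1 _ _ u (fun=> v%:E)) ?lee_fin // [RHS]esum_mkcond.
by apply: eq_esum => w _; rewrite in_set1; case: eqP.
Qed.

Lemma vinc_neq m (z : state m) l : vinc z l != z.
Proof.
by apply/eqP => /(congr1 (fun y : state m => y l)); rewrite ffunE eqxx => /esym/n_Sn.
Qed.

Lemma nzeros_le m (z : state m) : (nzeros z <= m)%N.
Proof. by rewrite /nzeros (leq_trans (max_card _)) // card_ord. Qed.

Lemma sum_if_zero (R : realType) m (z : state m) (a b : R) :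
  \sum_(l < m) (if z l == 0%N then a else b)
  = a * (nzeros z)%:R + b * (m - nzeros z)%:R.
Proof.
rewrite (bigID (fun l => z l == 0%N)) /=.
rewrite (eq_bigr (fun=> a)) => [|l ->//].
rewrite [X in _ + X](eq_bigr (fun=> b)) => [|l /negPf ->//].
have -> : nzeros z = #|[pred l | z l == 0%N]|.
  by apply: eq_card => l; rewrite !inE /=; apply/idP/idP => [/set_mem|/mem_set].
have := cardC [pred l | z l == 0%N]; rewrite card_ord; set j := #|_| => card_split.
have -> : (m - j)%N = #|[predC [pred l | z l == 0%N]]| by rewrite -{1}card_split addKn.
by rewrite !sumr_const !mulr_natr; congr (_ *+ _ + _ *+ _); apply: eq_card.
Qed.

Section chain.
Variables (R : realType) (m k : nat).
Hypotheses (m_gt0 : (0 < m)%N) (m_le_k : (m <= k)%N).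
Implicit Types (x z w : state m) (h : state m -> R).

Let k_gt0 : (0 < k)%N := leq_trans m_gt0 m_le_k.

Definition down_prob z : R :=
  if nzeros z == 0%N then (k%:R - m%:R) / k%:R else 0.

Definition stepE z h : R :=
  down_prob z * h (vdec z) + \sum_(l < m) up_prob R k z l * h (vinc z l).

Lemma down_prob_ge0 z : 0 <= down_prob z.
Proof. by rewrite /down_prob; case: ifP; rewrite // divr_ge0 ?subr_ge0 ?ler_nat. Qed.

Lemma up_prob_gt0 z l : 0 < up_prob R k z l.
Proof.
rewrite /up_prob; case: ifP => [_|j0]; first by rewrite divr_gt0 ?ltr0n.
case: ifP => [_|_]; first by rewrite divr_gt0 ?ltr0n.
case: ifP => _; last by rewrite divr_gt0 ?ltr0n.
rewrite -natrB; last by rewrite (leq_trans (leq_subr _ _)).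
rewrite divr_gt0 ?mulr_gt0 ?ltr0n ?subn_gt0 ?(leq_trans _ m_le_k) //.
  by rewrite ltn_subrL lt0n j0.
by rewrite lt0n j0.
Qed.

Lemma eq_stepE z h1 h2 : h1 =1 h2 -> stepE z h1 = stepE z h2.
Proof. by move=> /funext ->. Qed.

Lemma stepED z h1 h2 : stepE z (fun w => h1 w + h2 w) = stepE z h1 + stepE z h2.
Proof.
by rewrite /stepE; under eq_bigr do rewrite mulrDr; rewrite big_split /=; ring.
Qed.

Lemma stepEZ z a h : stepE z (fun w => a * h w) = a * stepE z h.
Proof. by rewrite /stepE; under eq_bigr do rewrite mulrCA; rewrite -mulr_sumr; ring. Qed.

Lemma stepEB z h1 h2 : stepE z (fun w => h1 w - h2 w) = stepE z h1 - stepE z h2.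
Proof.
rewrite -[in RHS]mulN1r -stepEZ -stepED.
by apply: eq_stepE => w; rewrite mulN1r.
Qed.

Lemma stepE1 z : stepE z (fun=> 1) = 1.
Proof.
have k_neq0 : k%:R != 0 :> R by rewrite pnatr_eq0 -lt0n.
have m_neq0 : m%:R != 0 :> R by rewrite pnatr_eq0 -lt0n.
rewrite /stepE /down_prob /up_prob mulr1; under eq_bigr do rewrite mulr1.
have [_|j_neq0] := eqVneq (nzeros z) 0%N.
  by rewrite sumr_const card_ord -mulr_natr; field.
rewrite add0r; have [_|j_neq_m] := eqVneq (nzeros z) m.
  by rewrite sumr_const card_ord -mulr_natr; field.
have jn_neq0 : (nzeros z)%:R != 0 :> R by rewrite pnatr_eq0.
rewrite sum_if_zero !natrB ?nzeros_le ?(leq_trans (leq_subr _ _)) //.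
by field; apply/andP.
Qed.

Lemma stepE_cst z c : stepE z (fun=> c) = c.
Proof.
by rewrite -[RHS]mulr1 -(stepE1 z) -stepEZ; apply: eq_stepE => w; rewrite mulr1.
Qed.

Lemma ler_stepE z h1 h2 :
  (nzeros z = 0%N -> h1 (vdec z) <= h2 (vdec z)) ->
  (forall l, h1 (vinc z l) <= h2 (vinc z l)) -> stepE z h1 <= stepE z h2.
Proof.
move=> le_down le_up; rewrite lerD //.
  have := down_prob_ge0 z; rewrite /down_prob.
  by case: eqP => [/le_down le_d c_ge0|_ _]; [apply: ler_wpM2l|rewrite !mul0r].
by apply: ler_sum => l _; rewrite ler_wpM2l // ltW ?up_prob_gt0.
Qed.

Lemma stepE_ge0 z h : (forall w, 0 <= h w) -> 0 <= stepE z h.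
Proof. by move=> h_ge0; rewrite -(stepE_cst z 0); apply: ler_stepE. Qed.

Lemma stepE_le1 z h : (forall w, h w <= 1) -> stepE z h <= 1.
Proof. by move=> h_le1; rewrite -[leRHS](stepE1 z); apply: ler_stepE. Qed.

Lemma stepE_ge_up z h l :
  (forall w, 0 <= h w) -> up_prob R k z l * h (vinc z l) <= stepE z h.
Proof.
move=> h_ge0; rewrite /stepE (bigD1 l) //= addrCA lerDl addr_ge0 ?mulr_ge0 //.
  exact: down_prob_ge0.
by rewrite sumr_ge0 // => i _; rewrite mulr_ge0 // ltW ?up_prob_gt0.
Qed.

Lemma trans_mulE z w h : trans R k z w * h w =
  (if w == vdec z then down_prob z * h (vdec z) else 0)
  + \sum_(l < m) (if w == vinc z l then up_prob R k z l * h (vinc z l) else 0).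
Proof.
rewrite /trans /down_prob mulrDl mulr_suml; congr (_ + _).
  by case: (w =P vdec z) => [->|_]; case: (nzeros z == 0%N); rewrite /= ?mul0r.
by apply: eq_bigr => l _; case: eqP => [->|]; rewrite ?mul0r.
Qed.

Lemma trans_stepE z w : trans R k z w = stepE z (fun y => if y == w then 1 else 0).
Proof.
rewrite -[LHS]mulr1 (trans_mulE z w (fun=> 1)) /stepE; congr (_ + _).
  by rewrite eq_sym; case: eqP; rewrite ?mulr0.
by apply: eq_bigr => l _; rewrite eq_sym; case: eqP; rewrite ?mulr0.
Qed.

Lemma esum_trans_mul z x h : (forall w, 0 <= h w) ->
  (\esum_(w in ~` [set x]) ((trans R k z w)%:E * (h w)%:E)
   = (stepE z (fun w => if w == x then 0 else h w))%:E)%E.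
Proof.
move=> h_ge0; set h' := fun w => if w == x then 0 else h w.
have h'_ge0 w : 0 <= h' w by rewrite /h'; case: ifP.
have up_ge0 l : 0 <= up_prob R k z l by rewrite ltW ?up_prob_gt0.
rewrite esum_mkcond (eq_esum (b := fun w => (trans R k z w * h' w)%:E)); last first.
  by move=> w _; rewrite in_setC in_set1 /h'; case: eqP; rewrite ?mulr0 ?EFinM.
under eq_esum do rewrite trans_mulE EFinD -sumEFin.
rewrite esumD; last 2 first.
- by move=> w _; case: ifP; rewrite // lee_fin mulr_ge0 ?down_prob_ge0.
- by move=> w _; rewrite sume_ge0 // => l _; case: ifP; rewrite // lee_fin mulr_ge0.
rewrite esum_point ?mulr_ge0 ?down_prob_ge0 // esum_sum => [|w l _ _]; last first.
  by case: ifP; rewrite // lee_fin mulr_ge0.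
by under eq_bigr do rewrite esum_point ?mulr_ge0 //; rewrite sumEFin -EFinD.
Qed.

(* [hitP x t z] is the probability, starting from [z], of visiting [x] at one
   of the times [1, ..., t]. *)
Fixpoint hitP x t z : R :=
  if t is t'.+1 then stepE z (fun w => if w == x then 1 else hitP x t' w) else 0.

Lemma hitP_le1 x t z : hitP x t z <= 1.
Proof. by elim: t z => [|t IH] z /=; [|apply: stepE_le1 => w; case: ifP]. Qed.

Lemma hitP_leS x t z : hitP x t z <= hitP x t.+1 z.
Proof.
elim: t z => [|t IH] z /=; first by apply: stepE_ge0 => w; case: ifP.
by apply: ler_stepE => [_|l]; case: ifP.
Qed.

Lemma compl_hitPS x t z :
  1 - hitP x t.+1 z = stepE z (fun w => if w == x then 0 else 1 - hitP x t w).
Proof.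
rewrite /= -[X in X - _](stepE_cst z 1) -stepEB.
by apply: eq_stepE => w; case: ifP; rewrite ?subrr.
Qed.

Lemma fp_hitP x t z : fp (trans R k) t z x = (hitP x t.+1 z - hitP x t z)%:E.
Proof.
elim: t z => [|t IH] z; first by rewrite /= subr0 trans_stepE.
rewrite /=; under eq_esum do rewrite IH.
rewrite esum_trans_mul => [|w]; last by rewrite subr_ge0 hitP_leS.
by rewrite -stepEB; congr (_%:E); apply: eq_stepE => w; case: ifP; rewrite ?subrr.
Qed.

Hypothesis k_le_mS : (k <= m.+1)%N.

Definition total z : R := \sum_(i < m) (z i)%:R.

Lemma total_vinc z l : total (vinc z l) = total z + 1.
Proof.
rewrite /total (bigD1 l) // [in RHS](bigD1 l) //= ffunE eqxx -natr1 addrAC.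
by congr (_ + _ + _); apply: eq_bigr => i /negPf i_neq; rewrite ffunE i_neq.
Qed.

Lemma total_vdec z : nzeros z = 0%N -> total (vdec z) = total z - m%:R.
Proof.
move=> /card0_eq no_zero.
have -> : m%:R = \sum_(i < m) 1 :> R by rewrite sumr_const card_ord.
rewrite /total -sumrB.
apply: eq_bigr => i _; rewrite ffunE -subn1 natrB // lt0n.
apply/negP => zi0; have := no_zero i.
by rewrite !inE (mem_set (zi0 : [set l | z l == 0%N]%classic i)).
Qed.

(* The drift of [total] is [m (m + 1 - k) / k] on [R_0] and [1] elsewhere. *)
Lemma total_subharmonic z : total z <= stepE z total.
Proof.
have -> : stepE z total = total z + stepE z (fun w => total w - total z).
  by rewrite stepEB stepE_cst addrC subrK.
rewrite lerDl /stepE; under eq_bigr do rewrite total_vinc addrAC subrr add0r mulr1.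
rewrite /down_prob; case: eqP => [j0|_]; last first.
  by rewrite mul0r add0r sumr_ge0 // => l _; rewrite ltW ?up_prob_gt0.
rewrite total_vdec // addrAC subrr add0r /up_prob j0 /= sumr_const card_ord.
have k_pos : 0 < k%:R :> R by rewrite ltr0n.
have k_le : k%:R <= m%:R + 1 :> R by rewrite natr1 ler_nat.
rewrite -mulr_natr (_ : _ + _ = m%:R * (m%:R + 1 - k%:R) / k%:R).
  by rewrite divr_ge0 ?mulr_ge0 ?subr_ge0 ?ler0n.
by field; rewrite lt0r_neq0.
Qed.

(* [total] is a submartingale; stopped at the first return to [x] (or at time [t]),
   it ends at [total x] after a return and at most at [total z + t] otherwise. *)
Lemma optional_stopping_total x t z :
  total z <= total x * hitP x t z + (total z + t%:R) * (1 - hitP x t z).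
Proof.
elim: t z => [|t IH] z; first by rewrite /= mulr0 add0r subr0 addr0 mulr1.
set stopped := fun w => total x * (if w == x then 1 else hitP x t w)
  + (total z + t.+1%:R) * (if w == x then 0 else 1 - hitP x t w).
have stopped_ge w : total w <= total z + 1 ->
    (if w == x then total x else total w) <= stopped w.
  rewrite /stopped; case: ifP => _ le_w; first by rewrite mulr1 mulr0 addr0.
  rewrite (le_trans (IH w)) // lerD2l ler_wpM2r ?subr_ge0 ?hitP_le1 //.
  by rewrite -natr1; lra.
apply: (le_trans (total_subharmonic z)).
rewrite (@eq_stepE _ _ (fun w => if w == x then total x else total w)); last first.
  by move=> w; case: eqP => [->|].
apply: (le_trans (ler_stepE (h2 := stopped) _ _)).
- by move=> j0; apply: stopped_ge; rewrite total_vdec //; have := ler0n R m; lra.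
- by move=> l; apply: stopped_ge; rewrite total_vinc.
by rewrite stepED !stepEZ -compl_hitPS.
Qed.

Lemma return_tail_ge x l t : up_prob R k x l / t.+1%:R <= 1 - hitP x t.+1 x.
Proof.
have := optional_stopping_total x t (vinc x l); rewrite total_vinc => opt.
have escape : 1 <= t.+1%:R * (1 - hitP x t (vinc x l)) by rewrite -natr1; nra.
rewrite compl_hitPS; apply: le_trans (stepE_ge_up _ l _); last first.
  by move=> w; case: ifP; rewrite // subr_ge0 hitP_le1.
rewrite (negPf (vinc_neq x l)) ler_pdivrMr ?ltr0n // -mulrA ler_pMr ?up_prob_gt0 //.
by rewrite mulrC.
Qed.

End chain.

Theorem proposition7p5 (R : realType) (n : nat) :
  (3 <= n)%N ->
  forall x : state n.-1, ~ positive_recurrent (trans R n) x.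
Proof.
case: n => [//|m] n3 x [return_sure mean_fin].
have m_gt0 : (0 < m)%N by rewrite -ltnS (leq_trans _ n3).
have fpE t := fp_hitP R m_gt0 (leqnSn m) x t x.
apply: (@heavy_tail_mean_infinite _ (fun t => hitP R m.+1 x t x)
                                    (up_prob R m.+1 x (Ordinal m_gt0))).
- exact: up_prob_gt0.
- by [].
- by move=> t; apply: hitP_leS.
- by rewrite -return_sure; apply: eq_esum => t _; rewrite fpE.
- by move=> t; apply: return_tail_ge.
- by under eq_esum do rewrite -fpE.
Qed.
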